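(* Let $h_{00},h_{11},h_{22},h_{33}>0$, $\beta = \frac{1}{6(\det h)^2}$ with $\det h = h_{00}h_{11}h_{22}h_{33}$, and let $p(x,y)=x^4+x^3y+xy^3+y^4$, $q(x,y)=5x^4+3x^3y-xy^3-3y^4$. Consider $\dot g_{00} = -\beta\, p(g_{11},g_{22})\, g_{00}^3$, $\dot g_{11} = -\beta\, q(g_{11},g_{22})\, g_{00}^2 g_{11}$, $\dot g_{22} = -\beta\, q(g_{22},g_{11})\, g_{00}^2 g_{22}$, $\dot g_{33} = 3\beta\, p(g_{11},g_{22})\, g_{00}^2 g_{33}$, with $g_{ii}(0)=h_{ii}$. Then the solution exists for all $t\ge 0$ and: $g_{00},g_{11},g_{22}\to 0$; $g_{33}$ is increasing and $g_{33}\to\infty$; $g_{11}/g_{22}\to 1$. If $h_{11}=h_{22}$ then, with $\mu = h_{00}^3h_{33}/\det h$, $g_{00} = \mu^{1/2}(24\mu\beta t + h_{11}^{-6})^{-1/6}$, $g_{11}=g_{22} = (24\mu\beta t + h_{11}^{-6})^{-1/6}$, $g_{33} = h_{11}^3 h_{33}(24\mu\beta t + h_{11}^{-6})^{1/2}$. If $h_{11}<h_{22}$, then $g_{11}<g_{22}$ for all $t$, $g_{22}$ is decreasing, $g_{11}/g_{22}$ is increasing, and $(g_{11}g_{22})^{25} = \eta\,(g_{22}-g_{11})^4\left(2g_{22}^2+g_{11}g_{22}+2g_{11}^2\right)^3$ for all $t$, where $\eta = \frac{(h_{11}h_{22})^{25}}{(h_{22}-h_{11})^4(2h_{22}^2+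h_{11}h_{22}+2h_{11}^2)^3}$.
   Context: This system is Bach flow $\partial_t g = B$, $g(0)=h$, on $\mathbb{R}\times Solv$ written in a diagonalizing basis: a left-invariant frame $\{\partial_0,e_1,e_2,e_3\}$ with $[e_i,e_j]=\sum \varepsilon_{ijl}E^{lk}e_k$, $E=\mathrm{diag}(-1,1,0)$, in which the left-invariant product metric is $g=\mathrm{diag}(g_{00},g_{11},g_{22},g_{33})$; $B$ is the Bach tensor. Along the flow $g_{00}g_{11}g_{22}g_{33}=\det h$ is constant. (The case $h_{11}>h_{22}$ is symmetric.) *)

From Stdlib Require Import Reals Lra.
Open Scope R_scope.

Definition pB (x y : R) : R := x^4 + x^3*y + x*y^3 + y^4.
Definition qB (x y : R) : R := 5*x^4 + 3*x^3*y - x*y^3 - 3*y^4.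

Definition rhs00 (b g0 g1 g2 g3 : R) : R := - b * pB g1 g2 * g0^3.
Definition rhs11 (b g0 g1 g2 g3 : R) : R := - b * qB g1 g2 * g0^2 * g1.
Definition rhs22 (b g0 g1 g2 g3 : R) : R := - b * qB g2 g1 * g0^2 * g2.
Definition rhs33 (b g0 g1 g2 g3 : R) : R := 3 * b * pB g1 g2 * g0^2 * g3.

Definition right_cont0 (f : R -> R) : Prop :=
  forall eps, 0 < eps -> exists delta, 0 < delta /\
    forall t, 0 <= t < delta -> Rabs (f t - f 0) < eps.

Definition is_global_solution (b h0 h1 h2 h3 : R) (g0 g1 g2 g3 : R -> R) : Prop :=
  g0 0 = h0 /\ g1 0 = h1 /\ g2 0 = h2 /\ g3 0 = h3 /\
  right_cont0 g0 /\ right_cont0 g1 /\ right_cont0 g2 /\ right_cont0 g3 /\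
  forall t, 0 < t ->
    derivable_pt_lim g0 t (rhs00 b (g0 t) (g1 t) (g2 t) (g3 t)) /\
    derivable_pt_lim g1 t (rhs11 b (g0 t) (g1 t) (g2 t) (g3 t)) /\
    derivable_pt_lim g2 t (rhs22 b (g0 t) (g1 t) (g2 t) (g3 t)) /\
    derivable_pt_lim g3 t (rhs33 b (g0 t) (g1 t) (g2 t) (g3 t)).

Definition tends_at_infty (f : R -> R) (L : R) : Prop :=
  forall eps, 0 < eps -> exists T, forall t, T <= t -> Rabs (f t - L) < eps.

Definition diverges_at_infty (f : R -> R) : Prop :=
  forall M, exists T, forall t, T <= t -> M < f t.

Definition strict_incr_on_nonneg (f : R -> R) : Prop :=
  forall s t, 0 <= s -> s < t -> f s < f t.
Definition strict_decr_on_nonneg (f : R -> R) : Prop :=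
  forall s t, 0 <= s -> s < t -> f t < f s.

(* Three quantities are conserved along solutions: [g0^3 g3], [g1 g2 / g0^2] and
   [K g1 g2 = (g2 - g1)^4 (2 g2^2 + g1 g2 + 2 g1^2)^3 / (g1 g2)^25].  Since [g1 g2 = m g0^2]
   with [m = h1 h2 / h0^2] and [pB x y >= 2 (x y)^2], the equation for [g0] gives
   [(1 / g0^6)' = 6 b pB g1 g2 / g0^4 >= 12 b m^2], so [g0^6 <= 1 / (12 b m^2 t)]: hence
   [g0 -> 0], [g1 g2 -> 0] and [g3 = h0^3 h3 / g0^3 -> oo].
   Constancy of [K] while [g1 g2 -> 0] forces [(g2 - g1)^2 = o (g1 g2)], i.e. [g1 / g2 -> 1].
   If [h1 = h2] then [K = 0] gives [g1 = g2] and the equation for [1 / g1^6] integrates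
   explicitly; if [h1 < h2] then [K > 0] keeps [g1 < g2], which gives the monotonicity claims.
   For existence, the first integrals reduce the system to an autonomous equation
   [r' = F r] for [r = g1 / g2] with [0 < F r <= c (1 - r)]; [r] is the inverse of
   [y |-> int_{r0}^y 1 / F], which is onto [[0, oo)] since [1 / F] is not integrable at 1.
   The case [h1 > h2] follows by exchanging [g1] and [g2]. *)

From Coquelicot Require Import Coquelicot.
From Stdlib Require Import Reals Lra Lia Ranalysis5 ClassicalEpsilon.
Open Scope R_scope.

(** * Calculus on the half-line *)

Lemma nondecreasing_of_deriv_nonneg f f' a b : a <= b ->
  (forall c, a <= c <= b -> derivable_pt_lim f c (f' c)) ->
  (forall c, a < c < b -> 0 <= f' c) -> f a <= f b.
Proof.
  intros Hab Hd Hs. destruct (Rle_lt_or_eq_dec _ _ Hab) as [Hlt | ->]; [|lra].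
  destruct (MVT_cor2 f f' a b Hlt Hd) as (c & Hc & Hmvt).
  assert (0 <= f' c * (b - a)) by (apply Rmult_le_pos; [apply Hs|]; lra).
  lra.
Qed.

Lemma increasing_of_deriv_pos f f' a b : a < b ->
  (forall c, a <= c <= b -> derivable_pt_lim f c (f' c)) ->
  (forall c, a < c < b -> 0 < f' c) -> f a < f b.
Proof.
  intros Hab Hd Hs. destruct (MVT_cor2 f f' a b Hab Hd) as (c & Hc & Hmvt).
  assert (0 < f' c * (b - a)) by (apply Rmult_lt_0_compat; [apply Hs|]; lra).
  lra.
Qed.

Lemma right_cont0_of_continuity_pt g f : continuity_pt g 0 ->
  (forall t, 0 <= t -> f t = g t) -> right_cont0 f.
Proof.
  intros Hg Hfg e He. destruct (Hg e He) as (d & Hd & Hclose). exists d. split; [exact Hd|].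
  intros t Ht. rewrite !Hfg by lra.
  destruct (Req_dec t 0) as [-> | Ht0]; [rewrite Rminus_diag, Rabs_R0; exact He|].
  apply Hclose. split; [split; [exact I | auto]|].
  simpl; unfold R_dist. rewrite Rminus_0_r, Rabs_right; lra.
Qed.

Lemma right_cont0_opp f : right_cont0 f -> right_cont0 (fun t => - f t).
Proof.
  intros Hf e He. destruct (Hf e He) as (d & Hd & Hclose). exists d. split; [exact Hd|].
  intros t Ht. replace (- f t - - f 0) with (- (f t - f 0)) by ring.
  rewrite Rabs_Ropp. auto.
Qed.

Section HalfLine.

Variables f f' : R -> R.
Hypothesis f_deriv : forall t, 0 < t -> derivable_pt_lim f t (f' t).
Hypothesis f_cont0 : right_cont0 f.

Lemma nondecreasing_of_deriv_nonneg_half_line s t : 0 <= s <= t ->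
  (forall c, 0 < c < t -> 0 <= f' c) -> f s <= f t.
Proof.
  intros Hst Hpos. destruct (Rle_lt_or_eq_dec 0 s (proj1 Hst)) as [Hs | <-].
  { apply (nondecreasing_of_deriv_nonneg f f'); [lra | |]; intros c Hc;
      [apply f_deriv | apply Hpos]; lra. }
  destruct (Rle_lt_or_eq_dec 0 t (proj2 Hst)) as [Ht | <-]; [|lra].
  (* [f] is nondecreasing on every [[s, t]] with [s > 0]; let [s] tend to 0. *)
  destruct (Rle_or_lt (f 0) (f t)) as [|Hlt]; [assumption | exfalso].
  destruct (f_cont0 (f 0 - f t)) as (d & Hd & Hclose); [lra|].
  set (s := Rmin (d / 2) (t / 2)).
  assert (Hs : 0 < s <= t / 2 /\ s <= d / 2)
    by (unfold s; repeat split; [apply Rmin_glb_lt | apply Rmin_r | apply Rmin_l]; lra).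
  assert (Hfs := Hclose s ltac:(lra)). apply Rabs_def2 in Hfs.
  assert (f s <= f t)
    by (apply (nondecreasing_of_deriv_nonneg f f'); [lra | |]; intros c Hc;
        [apply f_deriv | apply Hpos]; lra).
  lra.
Qed.

Lemma strict_incr_of_deriv_pos : (forall t, 0 < t -> 0 < f' t) -> strict_incr_on_nonneg f.
Proof.
  intros Hpos s t Hs Hst.
  assert (f s <= f ((s + t) / 2)).
  { apply nondecreasing_of_deriv_nonneg_half_line; [lra|]. intros c Hc. left; apply Hpos; lra. }
  assert (f ((s + t) / 2) < f t).
  { apply (increasing_of_deriv_pos f f'); [lra | |]; intros c Hc;
      [apply f_deriv | apply Hpos]; lra. }
  lra.
Qed.

End HalfLine.

Lemma strict_decr_of_deriv_neg f f' :
  (forall t, 0 < t -> derivable_pt_lim f t (f' t)) -> right_cont0 f ->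
  (forall t, 0 < t -> f' t < 0) -> strict_decr_on_nonneg f.
Proof.
  intros Hd Hc Hneg s t Hs Hst.
  enough (- f s < - f t) by lra.
  apply (strict_incr_of_deriv_pos (fun t => - f t) (fun t => - f' t)); auto.
  - intros c Hc'. apply derivable_pt_lim_opp; auto.
  - apply right_cont0_opp; auto.
  - intros c Hc'. specialize (Hneg c Hc'). lra.
Qed.

Lemma const_of_deriv_zero f f' :
  (forall t, 0 < t -> derivable_pt_lim f t (f' t)) -> right_cont0 f ->
  (forall t, 0 < t -> f' t = 0) -> forall t, 0 <= t -> f t = f 0.
Proof.
  intros Hd Hc Hzero t Ht.
  assert (f 0 <= f t).
  { apply (nondecreasing_of_deriv_nonneg_half_line f f'); auto; [lra|].
    intros c Hc'; rewrite Hzero; lra. }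
  assert (- f 0 <= - f t).
  { apply (nondecreasing_of_deriv_nonneg_half_line (fun t => - f t) (fun t => - f' t)).
    - intros c Hc'; apply derivable_pt_lim_opp; auto.
    - apply right_cont0_opp; auto.
    - lra.
    - intros c Hc'; rewrite Hzero; lra. }
  lra.
Qed.

(* Continuing [f] by the constant [f 0] to the left turns right-continuity at 0 into
   continuity at 0, so that Stdlib's continuity lemmas, IVT and extreme value
   theorem apply on intervals starting at 0. *)
Definition extend0 (f : R -> R) (t : R) : R := f (Rmax t 0).

Lemma extend0_nonneg f t : 0 <= t -> extend0 f t = f t.
Proof. intros Ht. unfold extend0. rewrite Rmax_left; auto. Qed.

Lemma continuity_extend0 f : right_cont0 f -> (forall t, 0 < t -> continuity_pt f t) ->
  forall t, continuity_pt (extend0 f) t.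
Proof.
  intros Hr Hc t. destruct (Rtotal_order t 0) as [Hlt | [-> | Hgt]].
  - apply (continuity_pt_locally_ext (fun _ => f 0) _ (- t)); [lra | |].
    + intros y Hy. unfold R_dist in Hy. apply Rabs_def2 in Hy.
      unfold extend0. rewrite Rmax_right; [reflexivity | lra].
    + apply continuity_pt_const. intros ? ?; reflexivity.
  - intros e He. destruct (Hr e He) as (d & Hd & Hclose). exists d. split; [exact Hd|].
    intros x [_ Hx]. simpl in *. unfold R_dist in *. unfold extend0.
    rewrite (Rmax_right 0 0) by lra.
    destruct (Rle_or_lt x 0).
    + rewrite Rmax_right, Rminus_diag, Rabs_R0 by assumption. exact He.
    + rewrite Rmax_left by lra. apply Hclose. apply Rabs_def2 in Hx. lra.
  - apply (continuity_pt_locally_ext f _ t); [lra | | auto].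
    intros y Hy. unfold R_dist in Hy. apply Rabs_def2 in Hy.
    unfold extend0. rewrite Rmax_left; [reflexivity | lra].
Qed.

Lemma right_cont0_of_extend0 f : continuity_pt (extend0 f) 0 -> right_cont0 f.
Proof.
  intros Hc. apply (right_cont0_of_continuity_pt _ _ Hc).
  intros t Ht. symmetry. apply extend0_nonneg, Ht.
Qed.

Lemma continuity_pt_pow_comp f t n : continuity_pt f t -> continuity_pt (fun s => f s ^ n) t.
Proof.
  intros Hf. apply (continuity_pt_comp f (fun y => y ^ n)); [exact Hf|].
  apply derivable_continuous_pt, derivable_pt_pow.
Qed.

Ltac continuity_from_hyps :=
  repeat first
    [ apply continuity_pt_plus | apply continuity_pt_minus | apply continuity_pt_mult
    | apply continuity_pt_opp | apply continuity_pt_pow_comp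
    | apply continuity_pt_const; intros ? ?; reflexivity
    | apply derivable_continuous_pt, derivable_pt_id | solve [auto] ].

Lemma is_derive_rw (f : R -> R) (x l l' : R) : is_derive f x l -> l = l' -> is_derive f x l'.
Proof. intros H <-. exact H. Qed.

Ltac derive_with_hyps :=
  repeat match goal with
  | H : is_derive _ ?t ?l |- context [Derive ?h ?t] =>
      replace (Derive h t) with l by (symmetry; apply is_derive_unique; exact H)
  end.

Ltac ex_derive_from_hyps := repeat split; try (eexists; eassumption).

Lemma const_of_is_derive_zero f g : (forall t, 0 < t -> is_derive f t 0) ->
  continuity_pt g 0 -> (forall t, 0 <= t -> f t = g t) -> forall t, 0 <= t -> f t = f 0.
Proof.
  intros Hd Hg Hfg. apply (const_of_deriv_zero f (fun _ => 0)).
  - intros t Ht. apply is_derive_Reals, Hd, Ht.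
  - exact (right_cont0_of_continuity_pt g f Hg Hfg).
  - reflexivity.
Qed.

Lemma pos_of_nonvanishing u : (forall t, continuity_pt (extend0 u) t) -> 0 < u 0 ->
  (forall t, 0 <= t -> u t <> 0) -> forall t, 0 <= t -> 0 < u t.
Proof.
  intros Hc H0 Hnz t Ht. destruct (Rle_or_lt (u t) 0) as [Hle | ]; [exfalso | assumption].
  destruct (Rle_lt_or_eq_dec _ _ Hle) as [Hlt | Heq]; [| exact (Hnz t Ht Heq)].
  assert (Ht0 : 0 < t) by (destruct (Rle_lt_or_eq_dec _ _ Ht) as [| <-]; lra).
  destruct (IVT (fun x => - extend0 u x) 0 t) as (z & Hz & Hroot).
  - intro x. apply continuity_pt_opp, Hc.
  - exact Ht0.
  - rewrite extend0_nonneg; lra.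
  - rewrite extend0_nonneg; lra.
  - rewrite extend0_nonneg in Hroot by lra. apply (Hnz z); lra.
Qed.

(* Gronwall: with [a >= - L] on [0, t], [u ^ 2 * exp (2 L s)] is nondecreasing on [0, t]. *)
Lemma pos_of_linear_ode (u a : R -> R) :
  (forall t, 0 < t -> is_derive u t (u t * a t)) ->
  (forall t, continuity_pt (extend0 u) t) -> (forall t, continuity_pt a t) ->
  0 < u 0 -> forall t, 0 <= t -> 0 < u t.
Proof.
  intros Hd Hcu Hca H0. apply pos_of_nonvanishing; [exact Hcu | exact H0|].
  intros t Ht Hzero.
  destruct (continuity_ab_min a 0 t Ht (fun c _ => Hca c)) as (m & Hmin & _).
  set (L := - a m).
  set (w := fun s => u s ^ 2 * exp (2 * L * s)).
  assert (Hw : w 0 <= w t).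
  { apply (nondecreasing_of_deriv_nonneg_half_line w
      (fun s => 2 * u s ^ 2 * (a s + L) * exp (2 * L * s))); [| | lra |].
    - intros c Hc. apply is_derive_Reals. assert (Hu := Hd c Hc).
      unfold w. auto_derive; [eexists; exact Hu|].
      derive_with_hyps. ring.
    - apply right_cont0_of_continuity_pt with
        (fun s => extend0 u s ^ 2 * exp (2 * L * s)).
      + apply continuity_pt_mult; [apply continuity_pt_pow_comp, Hcu|].
        apply (continuity_pt_comp (fun s => 2 * L * s) exp); [continuity_from_hyps|].
        apply derivable_continuous_pt, derivable_pt_exp.
      + intros s Hs. unfold w. rewrite extend0_nonneg; auto.
    - intros c Hc.
      assert (0 <= a c + L) by (assert (a m <= a c) by (apply Hmin; lra); unfold L; lra).
      assert (0 <= u c ^ 2) by apply pow2_ge_0.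
      assert (0 < exp (2 * L * c)) by apply exp_pos.
      apply Rmult_le_pos; [apply Rmult_le_pos|]; lra. }
  unfold w in Hw. rewrite Hzero, Rmult_0_r, exp_0 in Hw.
  assert (0 < u 0 ^ 2) by (apply pow_lt; exact H0). lra.
Qed.

(** * Limits at infinity *)

Lemma tends_at_infty_is_lim f l : tends_at_infty f l <-> is_lim f p_infty l.
Proof.
  split; intros H.
  - apply is_lim_spec. intros eps. destruct (H eps (cond_pos eps)) as (T & HT).
    exists T. intros t Ht. apply HT. lra.
  - intros eps He. destruct (proj2 (is_lim_spec f p_infty l) H (mkposreal eps He)) as (T & HT).
    exists (T + 1). intros t Ht. apply HT. lra.
Qed.

Lemma is_lim_div_id_p_infty k : is_lim (fun t => k / t) p_infty 0.
Proof.
  replace (Finite 0) with (Rbar_mult k (Rbar_inv p_infty)) by (simpl; f_equal; ring).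
  apply is_lim_scal_l, is_lim_inv; [apply is_lim_id | discriminate].
Qed.

Lemma tends_0_of_pow f n : (forall t, 0 <= t -> 0 < f t) ->
  tends_at_infty (fun t => f t ^ S n) 0 -> tends_at_infty f 0.
Proof.
  intros Hpos Hlim eps He.
  destruct (Hlim (eps ^ S n)) as (T & HT); [apply pow_lt; exact He|].
  exists (Rmax T 0). intros t Ht.
  assert (Hft := Hpos t (Rle_trans _ _ _ (Rmax_r T 0) Ht)).
  specialize (HT t (Rle_trans _ _ _ (Rmax_l T 0) Ht)).
  rewrite Rminus_0_r, Rabs_right in * by (try apply Rle_ge, pow_le; lra).
  destruct (Rlt_or_le (f t) eps) as [| Hge]; [assumption|].
  assert (eps ^ S n <= f t ^ S n) by (apply pow_incr; lra). lra.
Qed.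

Lemma diverges_of_inv_tends_0 f : (forall t, 0 <= t -> 0 < f t) ->
  tends_at_infty (fun t => / f t) 0 -> diverges_at_infty f.
Proof.
  intros Hpos Hlim M.
  destruct (Hlim (/ (Rabs M + 1))) as (T & HT);
    [apply Rinv_0_lt_compat; pose proof (Rabs_pos M); lra|].
  exists (Rmax T 0). intros t Ht.
  assert (Hft := Hpos t (Rle_trans _ _ _ (Rmax_r T 0) Ht)).
  specialize (HT t (Rle_trans _ _ _ (Rmax_l T 0) Ht)).
  rewrite Rminus_0_r, Rabs_right in HT by (apply Rle_ge, Rlt_le, Rinv_0_lt_compat; exact Hft).
  assert (Rabs M + 1 < f t).
  { rewrite <- (Rinv_inv (f t)). rewrite <- (Rinv_inv (Rabs M + 1)) at 1.
    apply Rinv_lt_contravar; [|exact HT].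
    apply Rmult_lt_0_compat; apply Rinv_0_lt_compat; [exact Hft | pose proof (Rabs_pos M); lra]. }
  pose proof (RRle_abs M). lra.
Qed.

Lemma scaled_pow_le A c z n : 0 <= A -> 0 < c -> 0 <= z < 1 -> z < c / (A + 1) ->
  A * z ^ S n <= c.
Proof.
  intros HA Hc Hz Hzc.
  assert (z ^ S n <= z).
  { simpl. assert (z ^ n <= 1) by (rewrite <- (pow1 n); apply pow_incr; lra).
    pose proof (pow_le z n (proj1 Hz)). nra. }
  assert (z * (A + 1) < c) by (apply (Rmult_lt_reg_r (/ (A + 1)));
    [apply Rinv_0_lt_compat; lra | rewrite Rmult_assoc, Rinv_r, Rmult_1_r by lra; exact Hzc]).
  nra.
Qed.

(** * The polynomials of the system and the invariant [K] *)

Lemma pB_pos x y : 0 < x -> 0 < y -> 0 < pB x y.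
Proof.
  intros Hx Hy. unfold pB.
  assert (0 < x ^ 3 * y) by (apply Rmult_lt_0_compat; [apply pow_lt|]; assumption).
  assert (0 < x * y ^ 3) by (apply Rmult_lt_0_compat; [|apply pow_lt]; assumption).
  assert (0 < x ^ 4) by (apply pow_lt; assumption).
  assert (0 < y ^ 4) by (apply pow_lt; assumption).
  lra.
Qed.

Lemma pB_ge_sqr_prod x y : 0 < x -> 0 < y -> 2 * (x * y) ^ 2 <= pB x y.
Proof.
  intros Hx Hy.
  assert (0 < x ^ 3 * y) by (apply Rmult_lt_0_compat; [apply pow_lt|]; assumption).
  assert (0 < x * y ^ 3) by (apply Rmult_lt_0_compat; [|apply pow_lt]; assumption).
  assert (pB x y - 2 * (x * y) ^ 2 = (x ^ 2 - y ^ 2) ^ 2 + x ^ 3 * y + x * y ^ 3)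
    by (unfold pB; ring).
  pose proof (pow2_ge_0 (x ^ 2 - y ^ 2)). lra.
Qed.

Lemma pB_comm x y : pB x y = pB y x.
Proof. unfold pB; ring. Qed.

Lemma qB_pos x y : 0 < x -> x < y -> 0 < qB y x.
Proof.
  intros Hx Hxy. unfold qB.
  assert (x ^ 2 < y ^ 2) by nra. assert (x ^ 4 < y ^ 4) by nra.
  assert (0 < x * y * (y ^ 2 - x ^ 2)) by (apply Rmult_lt_0_compat; nra).
  nra.
Qed.

Lemma qB_lt_swap x y : 0 < x -> x < y -> qB x y < qB y x.
Proof.
  intros Hx Hxy.
  assert (qB y x - qB x y = 4 * (y - x) * (2 * y ^ 3 + 3 * y ^ 2 * x + 3 * y * x ^ 2 + 2 * x ^ 3))
    by (unfold qB; ring).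
  assert (0 < 2 * y ^ 3 + 3 * y ^ 2 * x + 3 * y * x ^ 2 + 2 * x ^ 3).
  { assert (0 < y) by lra.
    assert (0 < y ^ 3) by (apply pow_lt; assumption).
    assert (0 < x ^ 3) by (apply pow_lt; assumption).
    assert (0 < y ^ 2 * x) by (apply Rmult_lt_0_compat; [apply pow_lt|]; assumption).
    assert (0 < y * x ^ 2) by (apply Rmult_lt_0_compat; [|apply pow_lt]; assumption).
    lra. }
  assert (0 < 4 * (y - x) * (2 * y ^ 3 + 3 * y ^ 2 * x + 3 * y * x ^ 2 + 2 * x ^ 3))
    by (apply Rmult_lt_0_compat; lra).
  lra.
Qed.

(* The first integral behind [(g1 g2)^25 = eta (g2 - g1)^4 (2 g2^2 + g1 g2 + 2 g1^2)^3],
   with [K h1 h2 = 1 / eta]. *)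
Definition K (x y : R) : R := (y - x) ^ 4 * (2 * y ^ 2 + x * y + 2 * x ^ 2) ^ 3 / (x * y) ^ 25.

Lemma K_nonneg x y : 0 < x -> 0 < y -> 0 <= K x y.
Proof.
  intros Hx Hy. unfold K.
  assert (0 < x * y) by (apply Rmult_lt_0_compat; assumption).
  apply Rmult_le_pos; [apply Rmult_le_pos|].
  - replace ((y - x) ^ 4) with (((y - x) ^ 2) ^ 2) by ring. apply pow2_ge_0.
  - apply pow_le. nra.
  - left. apply Rinv_0_lt_compat, pow_lt. assumption.
Qed.

Lemma K_diag x : K x x = 0.
Proof. unfold K. replace (x - x) with 0 by ring. rewrite pow_i by lia. unfold Rdiv; ring. Qed.

Lemma K_eq0 x y : 0 < x -> 0 < y -> K x y = 0 -> x = y.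
Proof.
  intros Hx Hy HK. unfold K in HK.
  assert (0 < x * y) by (apply Rmult_lt_0_compat; assumption).
  assert (0 < (2 * y ^ 2 + x * y + 2 * x ^ 2) ^ 3) by (apply pow_lt; nra).
  assert (0 < (x * y) ^ 25) by (apply pow_lt; assumption).
  assert (H4 : (y - x) ^ 4 = 0).
  { apply (Rmult_eq_reg_r ((2 * y ^ 2 + x * y + 2 * x ^ 2) ^ 3 / (x * y) ^ 25));
      [| apply Rgt_not_eq, Rdiv_lt_0_compat; assumption].
    unfold Rdiv in *. rewrite Rmult_0_l, <- HK. ring. }
  destruct (Req_dec (y - x) 0) as [| Hne]; [lra|].
  exfalso. exact (pow_nonzero _ 4 Hne H4).
Qed.

Lemma ratio_near_one x y d : 0 < x -> 0 < y -> 0 <= d <= 1 / 2 ->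
  (y - x) ^ 2 <= d * (x * y) -> (x / y - 1) ^ 2 <= 2 * d.
Proof.
  intros Hx Hy Hd Hxy. set (r := x / y).
  assert (Hr : 0 < r) by (apply Rdiv_lt_0_compat; assumption).
  assert (Hxr : x = r * y) by (unfold r; field; lra).
  assert (Hy2 : 0 < y ^ 2) by (apply pow_lt; exact Hy).
  assert (Hr1 : (r - 1) ^ 2 <= d * r).
  { apply (Rmult_le_reg_r (y ^ 2) _ _ Hy2).
    replace ((r - 1) ^ 2 * y ^ 2) with ((y - x) ^ 2) by (rewrite Hxr; ring).
    replace (d * r * y ^ 2) with (d * (x * y)) by (rewrite Hxr; ring). exact Hxy. }
  assert (r <= 2) by nra.
  nra.
Qed.

Lemma sqr_diff_le_of_K x y d : 0 < x -> 0 < y -> 0 <= d ->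
  K x y / 125 * (x * y) ^ 20 <= d ^ 2 -> (y - x) ^ 2 <= d * (x * y).
Proof.
  intros Hx Hy Hd Hsmall. set (V := 2 * y ^ 2 + x * y + 2 * x ^ 2).
  assert (Hxy : 0 < x * y) by (apply Rmult_lt_0_compat; assumption).
  assert (HV : 5 * (x * y) <= V) by (unfold V; pose proof (pow2_ge_0 (y - x)); nra).
  assert (HV3 : (5 * (x * y)) ^ 3 <= V ^ 3) by (apply pow_incr; lra).
  assert (Hp : 0 < (x * y) ^ 3) by (apply pow_lt; exact Hxy).
  assert (H4 : 0 <= (y - x) ^ 4)
    by (replace ((y - x) ^ 4) with (((y - x) ^ 2) ^ 2) by ring; apply pow2_ge_0).
  assert (HK : (y - x) ^ 4 * V ^ 3 = K x y * (x * y) ^ 25)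
    by (unfold K, V; field; split; apply Rgt_not_eq; assumption).
  assert (Hdiff : ((y - x) ^ 2) ^ 2 <= (d * (x * y)) ^ 2).
  { apply (Rmult_le_reg_r (125 * (x * y) ^ 3)); [lra|].
    apply Rle_trans with ((y - x) ^ 4 * V ^ 3).
    - replace (((y - x) ^ 2) ^ 2 * (125 * (x * y) ^ 3)) with ((y - x) ^ 4 * (5 * (x * y)) ^ 3)
        by ring.
      apply Rmult_le_compat_l; assumption.
    - rewrite HK.
      replace ((d * (x * y)) ^ 2 * (125 * (x * y) ^ 3)) with (125 * (x * y) ^ 5 * d ^ 2) by ring.
      replace (K x y * (x * y) ^ 25) with (125 * (x * y) ^ 5 * (K x y / 125 * (x * y) ^ 20))
        by (field; lra).
      apply Rmult_le_compat_l; [pose proof (pow_lt _ 5 Hxy); lra | exact Hsmall]. }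
  destruct (Rle_or_lt ((y - x) ^ 2) (d * (x * y))) as [| Hlt]; [assumption|].
  assert (0 <= d * (x * y)) by (apply Rmult_le_pos; lra).
  nra.
Qed.

Lemma exp_le_compat x y : x <= y -> exp x <= exp y.
Proof. intros [H | ->]; [left; apply exp_increasing, H | right; reflexivity]. Qed.

Lemma Rpower_inv_pow x n a : 0 < x -> Rpower (/ x ^ n) a = Rpower x (- (a * INR n)).
Proof.
  intros Hx. unfold Rpower. f_equal.
  rewrite ln_Rinv, Rcomplements.ln_pow by (try apply pow_lt; exact Hx). ring.
Qed.

Lemma Rpower_sqr_half x : 0 < x -> Rpower (x ^ 2) (1 / 2) = x.
Proof.
  intros Hx. rewrite <- Rpower_pow, Rpower_mult by exact Hx. simpl INR.
  replace ((1 + 1) * (1 / 2)) with 1 by field. apply Rpower_1, Hx.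
Qed.

(** * Behaviour of solutions *)

Section Solution.

Context {b h0 h1 h2 h3 : R} {g0 g1 g2 g3 : R -> R}.
Hypothesis sol : is_global_solution b h0 h1 h2 h3 g0 g1 g2 g3.
Hypotheses (b_pos : 0 < b) (h0_pos : 0 < h0) (h1_pos : 0 < h1) (h2_pos : 0 < h2)
  (h3_pos : 0 < h3).

Lemma sol_init : g0 0 = h0 /\ g1 0 = h1 /\ g2 0 = h2 /\ g3 0 = h3.
Proof. destruct sol as (E0 & E1 & E2 & E3 & _). auto. Qed.

Lemma sol_is_derive t : 0 < t ->
  is_derive g0 t (rhs00 b (g0 t) (g1 t) (g2 t) (g3 t)) /\
  is_derive g1 t (rhs11 b (g0 t) (g1 t) (g2 t) (g3 t)) /\
  is_derive g2 t (rhs22 b (g0 t) (g1 t) (g2 t) (g3 t)) /\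
  is_derive g3 t (rhs33 b (g0 t) (g1 t) (g2 t) (g3 t)).
Proof.
  intros Ht. destruct sol as (_ & _ & _ & _ & _ & _ & _ & _ & D).
  destruct (D t Ht) as (D0 & D1 & D2 & D3).
  split; [|split; [|split]]; apply is_derive_Reals; assumption.
Qed.

Lemma sol_continuity :
  (forall t, continuity_pt (extend0 g0) t) /\ (forall t, continuity_pt (extend0 g1) t) /\
  (forall t, continuity_pt (extend0 g2) t) /\ (forall t, continuity_pt (extend0 g3) t).
Proof.
  destruct sol as (_ & _ & _ & _ & R0 & R1 & R2 & R3 & D).
  assert (Hc : forall f l, right_cont0 f -> (forall t, 0 < t -> derivable_pt_lim f t (l t)) ->
    forall t, continuity_pt (extend0 f) t).
  { intros f l Hr Hd. apply continuity_extend0; [exact Hr|].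
    intros t Ht. apply derivable_continuous_pt. exists (l t). apply Hd, Ht. }
  repeat split; (eapply Hc; [eassumption|]); intros t Ht; apply (D t Ht).
Qed.

Lemma sol_pos t : 0 <= t -> 0 < g0 t /\ 0 < g1 t /\ 0 < g2 t /\ 0 < g3 t.
Proof.
  destruct sol_init as (E0 & E1 & E2 & E3). destruct sol_continuity as (C0 & C1 & C2 & C3).
  (* each component solves a linear equation [u' = u a] with a continuous [a] *)
  assert (P0 : forall t, 0 <= t -> 0 < g0 t).
  { apply (pos_of_linear_ode g0
      (fun c => - b * pB (extend0 g1 c) (extend0 g2 c) * extend0 g0 c ^ 2));
      [| exact C0 | intro; unfold pB; continuity_from_hyps | lra].
    intros c Hc. destruct (sol_is_derive c Hc) as (D & _).
    rewrite !extend0_nonneg by lra. apply (is_derive_rw _ _ _ _ D). unfold rhs00; ring. }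
  assert (P1 : forall t, 0 <= t -> 0 < g1 t).
  { apply (pos_of_linear_ode g1
      (fun c => - b * qB (extend0 g1 c) (extend0 g2 c) * extend0 g0 c ^ 2));
      [| exact C1 | intro; unfold qB; continuity_from_hyps | lra].
    intros c Hc. destruct (sol_is_derive c Hc) as (_ & D & _).
    rewrite !extend0_nonneg by lra. apply (is_derive_rw _ _ _ _ D). unfold rhs11; ring. }
  assert (P2 : forall t, 0 <= t -> 0 < g2 t).
  { apply (pos_of_linear_ode g2
      (fun c => - b * qB (extend0 g2 c) (extend0 g1 c) * extend0 g0 c ^ 2));
      [| exact C2 | intro; unfold qB; continuity_from_hyps | lra].
    intros c Hc. destruct (sol_is_derive c Hc) as (_ & _ & D & _).
    rewrite !extend0_nonneg by lra. apply (is_derive_rw _ _ _ _ D). unfold rhs22; ring. }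
  assert (P3 : forall t, 0 <= t -> 0 < g3 t).
  { apply (pos_of_linear_ode g3
      (fun c => 3 * b * pB (extend0 g1 c) (extend0 g2 c) * extend0 g0 c ^ 2));
      [| exact C3 | intro; unfold pB; continuity_from_hyps | lra].
    intros c Hc. destruct (sol_is_derive c Hc) as (_ & _ & _ & D).
    rewrite !extend0_nonneg by lra. apply (is_derive_rw _ _ _ _ D). unfold rhs33; ring. }
  intros Ht. auto.
Qed.

Lemma sol_g0_cube_g3 t : 0 <= t -> g0 t ^ 3 * g3 t = h0 ^ 3 * h3.
Proof.
  intros Ht. destruct sol_init as (E0 & _ & _ & E3). rewrite <- E0, <- E3.
  destruct sol_continuity as (C0 & _ & _ & C3).
  apply (const_of_is_derive_zero (fun s => g0 s ^ 3 * g3 s)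
    (fun s => extend0 g0 s ^ 3 * extend0 g3 s)); [| continuity_from_hyps | | exact Ht].
  - intros s Hs. destruct (sol_is_derive s Hs) as (D0 & _ & _ & D3).
    auto_derive; [ex_derive_from_hyps | derive_with_hyps; unfold rhs00, rhs33; ring].
  - intros s Hs. rewrite !extend0_nonneg by exact Hs. reflexivity.
Qed.

(* [qB x y + qB y x = 2 pB x y], so [(g1 g2)' / (g1 g2) = 2 g0' / g0]. *)
Lemma sol_prod_div_g0_sqr t : 0 <= t -> g1 t * g2 t / g0 t ^ 2 = h1 * h2 / h0 ^ 2.
Proof.
  intros Ht. destruct sol_init as (E0 & E1 & E2 & _). rewrite <- E0, <- E1, <- E2.
  destruct sol_continuity as (C0 & C1 & C2 & _).
  apply (const_of_is_derive_zero (fun s => g1 s * g2 s / g0 s ^ 2)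
    (fun s => extend0 g1 s * extend0 g2 s / extend0 g0 s ^ 2)); [| | | exact Ht].
  - intros s Hs. destruct (sol_is_derive s Hs) as (D0 & D1 & D2 & _).
    destruct (sol_pos s (Rlt_le _ _ Hs)) as (Q0 & _).
    auto_derive.
    + ex_derive_from_hyps. exact (Rgt_not_eq _ _ (pow_lt _ 2 Q0)).
    + derive_with_hyps. unfold rhs00, rhs11, rhs22, pB, qB. field. lra.
  - apply continuity_pt_div; [continuity_from_hyps | continuity_from_hyps |].
    rewrite extend0_nonneg, E0 by lra. apply pow_nonzero. lra.
  - intros s Hs. rewrite !extend0_nonneg by exact Hs. reflexivity.
Qed.

Lemma sol_K t : 0 <= t -> K (g1 t) (g2 t) = K h1 h2.
Proof.
  intros Ht. destruct sol_init as (_ & E1 & E2 & _). rewrite <- E1, <- E2.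
  destruct sol_continuity as (_ & C1 & C2 & _).
  apply (const_of_is_derive_zero (fun s => K (g1 s) (g2 s))
    (fun s => K (extend0 g1 s) (extend0 g2 s)));
    [| | | exact Ht].
  - intros s Hs. destruct (sol_is_derive s Hs) as (_ & D1 & D2 & _).
    destruct (sol_pos s (Rlt_le _ _ Hs)) as (_ & Q1 & Q2 & _).
    assert (Hp : 0 < g1 s * g2 s) by (apply Rmult_lt_0_compat; assumption).
    unfold K. auto_derive.
    + ex_derive_from_hyps. exact (Rgt_not_eq _ _ (pow_lt _ 25 Hp)).
    + derive_with_hyps. unfold rhs11, rhs22, qB. field. lra.
  - unfold K. apply continuity_pt_div; [continuity_from_hyps | continuity_from_hyps |].
    rewrite !extend0_nonneg by lra. rewrite E1, E2. apply pow_nonzero. nra.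
  - intros s Hs. rewrite !extend0_nonneg by exact Hs. reflexivity.
Qed.

Lemma sol_prod t : 0 <= t -> g1 t * g2 t = h1 * h2 / h0 ^ 2 * g0 t ^ 2.
Proof.
  intros Ht. rewrite <- (sol_prod_div_g0_sqr t Ht).
  destruct (sol_pos t Ht) as (Q0 & _). field. lra.
Qed.

Lemma sol_g0_inv6_lower t : 0 <= t ->
  / h0 ^ 6 + 12 * b * (h1 * h2 / h0 ^ 2) ^ 2 * t <= / g0 t ^ 6.
Proof.
  intros Ht. set (k := 12 * b * (h1 * h2 / h0 ^ 2) ^ 2).
  destruct sol_init as (E0 & _). destruct sol_continuity as (C0 & _).
  enough (/ g0 0 ^ 6 - k * 0 <= / g0 t ^ 6 - k * t) by (rewrite E0 in *; lra).
  apply (nondecreasing_of_deriv_nonneg_half_line (fun s => / g0 s ^ 6 - k * s)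
    (fun s => 6 * b * pB (g1 s) (g2 s) / g0 s ^ 4 - k)); [| | lra |].
  - intros s Hs. destruct (sol_is_derive s Hs) as (D0 & _).
    destruct (sol_pos s (Rlt_le _ _ Hs)) as (Q0 & _).
    apply is_derive_Reals. auto_derive.
    + ex_derive_from_hyps. exact (Rgt_not_eq _ _ (pow_lt _ 6 Q0)).
    + derive_with_hyps. unfold rhs00. field. lra.
  - apply (right_cont0_of_continuity_pt (fun s => / extend0 g0 s ^ 6 - k * s)).
    + apply continuity_pt_minus;
      [apply continuity_pt_inv; [continuity_from_hyps|] | continuity_from_hyps].
      rewrite extend0_nonneg, E0 by lra. apply pow_nonzero. lra.
    + intros s Hs. rewrite extend0_nonneg by exact Hs. reflexivity.
  - intros s Hs. destruct (sol_pos s ltac:(lra)) as (Q0 & Q1 & Q2 & _).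
    assert (Hg4 : 0 < g0 s ^ 4) by (apply pow_lt; exact Q0).
    (* [pB g1 g2 >= 2 (g1 g2)^2], and [g1 g2] is a constant multiple of [g0^2] *)
    assert (Hp := pB_ge_sqr_prod _ _ Q1 Q2). rewrite sol_prod in Hp by lra.
    enough (k * g0 s ^ 4 <= 6 * b * pB (g1 s) (g2 s)).
    { enough (k <= 6 * b * pB (g1 s) (g2 s) / g0 s ^ 4) by lra.
      apply (Rmult_le_reg_r (g0 s ^ 4) _ _ Hg4).
      unfold Rdiv. rewrite Rmult_assoc, Rinv_l by lra. lra. }
    unfold k. nra.
Qed.

Lemma sol_g0_tends_0 : tends_at_infty g0 0.
Proof.
  set (k := 12 * b * (h1 * h2 / h0 ^ 2) ^ 2).
  assert (Hk : 0 < k) by (unfold k; apply Rmult_lt_0_compat;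
    [lra | apply pow_lt, Rdiv_lt_0_compat; [nra | apply pow_lt; lra]]).
  apply (tends_0_of_pow g0 5); [intros t Ht; apply sol_pos, Ht|].
  apply tends_at_infty_is_lim.
  apply (is_lim_le_le_loc (fun _ => 0) (fun t => / k / t));
    [| apply is_lim_const | apply is_lim_div_id_p_infty].
  exists 0. intros t Ht. destruct (sol_pos t ltac:(lra)) as (Q0 & _).
  assert (H6 : 0 < g0 t ^ 6) by (apply pow_lt; exact Q0).
  split; [lra|].
  assert (Hb := sol_g0_inv6_lower t ltac:(lra)). fold k in Hb.
  assert (0 < / h0 ^ 6) by (apply Rinv_0_lt_compat, pow_lt; lra).
  assert (Hkt : k * t <= / g0 t ^ 6) by lra.
  apply (Rmult_le_reg_r (k * t / g0 t ^ 6)); [apply Rdiv_lt_0_compat; nra|].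
  replace (g0 t ^ 6 * (k * t / g0 t ^ 6)) with (k * t) by (field; lra).
  replace (/ k / t * (k * t / g0 t ^ 6)) with (/ g0 t ^ 6) by (field; lra).
  exact Hkt.
Qed.

Lemma sol_prod_tends_0 : tends_at_infty (fun t => g1 t * g2 t) 0.
Proof.
  apply tends_at_infty_is_lim.
  apply (is_lim_ext_loc (fun t => h1 * h2 / h0 ^ 2 * (g0 t * g0 t))).
  { exists 0. intros t Ht. rewrite sol_prod by lra. ring. }
  replace (Finite 0) with (Rbar_mult (h1 * h2 / h0 ^ 2) (Rbar_mult 0 0)) by (simpl; f_equal; ring).
  apply is_lim_scal_l, is_lim_mult; [| | exact I]; apply tends_at_infty_is_lim, sol_g0_tends_0.
Qed.

Lemma sol_ratio_tends_1 : tends_at_infty (fun t => g1 t / g2 t) 1.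
Proof.
  intros eps Heps. set (d := Rmin (1 / 2) (eps ^ 2 / 4)).
  assert (He2 : 0 < eps ^ 2) by (apply pow_lt; exact Heps).
  assert (Hd : 0 < d <= 1 / 2 /\ d <= eps ^ 2 / 4)
    by (unfold d; repeat split; [apply Rmin_glb_lt | apply Rmin_l | apply Rmin_r]; lra).
  set (A := K h1 h2 / 125).
  assert (HA : 0 <= A) by (unfold A; pose proof (K_nonneg h1 h2 h1_pos h2_pos); lra).
  assert (Hd2 : 0 < d ^ 2) by (apply pow_lt; lra).
  destruct (sol_prod_tends_0 (Rmin 1 (d ^ 2 / (A + 1)))) as (T & HT).
  { apply Rmin_glb_lt; [lra | apply Rdiv_lt_0_compat; lra]. }
  exists (Rmax T 0). intros t Ht.
  assert (Ht0 : 0 <= t) by (eapply Rle_trans; [apply Rmax_r | exact Ht]).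
  specialize (HT t (Rle_trans _ _ _ (Rmax_l T 0) Ht)).
  destruct (sol_pos t Ht0) as (_ & Q1 & Q2 & _).
  assert (Hp : 0 < g1 t * g2 t) by (apply Rmult_lt_0_compat; assumption).
  rewrite Rminus_0_r, Rabs_right in HT by lra.
  assert (Hsmall : A * (g1 t * g2 t) ^ 20 <= d ^ 2).
  { apply scaled_pow_le; [exact HA | exact Hd2 | |].
    - split; [lra|]. eapply Rlt_le_trans; [exact HT | apply Rmin_l].
    - eapply Rlt_le_trans; [exact HT | apply Rmin_r]. }
  unfold A in Hsmall. rewrite <- (sol_K t Ht0) in Hsmall.
  assert (Hr := ratio_near_one _ _ d Q1 Q2 ltac:(lra)
    (sqr_diff_le_of_K _ _ d Q1 Q2 ltac:(lra) Hsmall)).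
  rewrite <- (Rabs_right eps) by lra. apply Rsqr_lt_abs_0. unfold Rsqr. simpl in Hr, He2. lra.
Qed.

Lemma sol_g1_tends_0 : tends_at_infty g1 0.
Proof.
  apply (tends_0_of_pow g1 1); [intros t Ht; apply sol_pos, Ht|].
  apply tends_at_infty_is_lim.
  apply (is_lim_ext_loc (fun t => g1 t / g2 t * (g1 t * g2 t))).
  { exists 0. intros t Ht. destruct (sol_pos t ltac:(lra)) as (_ & _ & Q2 & _). field. lra. }
  replace (Finite 0) with (Rbar_mult 1 0) by (simpl; f_equal; ring).
  apply is_lim_mult; [| | exact I]; apply tends_at_infty_is_lim;
    [apply sol_ratio_tends_1 | apply sol_prod_tends_0].
Qed.

Lemma sol_g2_tends_0 : tends_at_infty g2 0.
Proof.
  apply (tends_0_of_pow g2 1); [intros t Ht; apply sol_pos, Ht|].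
  apply tends_at_infty_is_lim.
  apply (is_lim_ext_loc (fun t => (g1 t * g2 t) / (g1 t / g2 t))).
  { exists 0. intros t Ht. destruct (sol_pos t ltac:(lra)) as (_ & Q1 & Q2 & _). field. lra. }
  replace (Finite 0) with (Rbar_div 0 1) by (simpl; f_equal; field).
  apply is_lim_div; [| | simpl; intros H; injection H; lra | exact I]; apply tends_at_infty_is_lim;
    [apply sol_prod_tends_0 | apply sol_ratio_tends_1].
Qed.

Lemma sol_g3_incr : strict_incr_on_nonneg g3.
Proof.
  apply (strict_incr_of_deriv_pos g3 (fun t => rhs33 b (g0 t) (g1 t) (g2 t) (g3 t))).
  - intros t Ht. apply is_derive_Reals, (sol_is_derive t Ht).
  - apply right_cont0_of_extend0, sol_continuity.
  - intros t Ht. destruct (sol_pos t ltac:(lra)) as (Q0 & Q1 & Q2 & Q3).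
    assert (0 < pB (g1 t) (g2 t)) by (apply pB_pos; assumption).
    assert (0 < g0 t ^ 2) by (apply pow_lt; exact Q0).
    unfold rhs33. repeat apply Rmult_lt_0_compat; lra.
Qed.

Lemma sol_g3_diverges : diverges_at_infty g3.
Proof.
  apply diverges_of_inv_tends_0; [intros t Ht; apply sol_pos, Ht|].
  apply tends_at_infty_is_lim.
  apply (is_lim_ext_loc (fun t => / (h0 ^ 3 * h3) * (g0 t * (g0 t * g0 t)))).
  { exists 0. intros t Ht. rewrite <- (sol_g0_cube_g3 t) by lra.
    destruct (sol_pos t ltac:(lra)) as (Q0 & _ & _ & Q3). field. lra. }
  replace (Finite 0) with (Rbar_mult (/ (h0 ^ 3 * h3)) (Rbar_mult 0 (Rbar_mult 0 0)))
    by (simpl; f_equal; ring).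
  assert (H0 := proj1 (tends_at_infty_is_lim _ _) sol_g0_tends_0).
  apply is_lim_scal_l, is_lim_mult; [| apply is_lim_mult | ]; try exact H0; exact I.
Qed.

Section EqualData.

Hypothesis h1_eq_h2 : h1 = h2.

Lemma sol_eq_g1_g2 t : 0 <= t -> g1 t = g2 t.
Proof.
  intros Ht. destruct (sol_pos t Ht) as (_ & Q1 & Q2 & _).
  apply K_eq0; [exact Q1 | exact Q2|]. rewrite sol_K, h1_eq_h2 by exact Ht. apply K_diag.
Qed.

Lemma sol_eq_g0 t : 0 <= t -> g0 t = h0 / h1 * g1 t.
Proof.
  intros Ht. destruct (sol_pos t Ht) as (Q0 & Q1 & _).
  assert (Hprod := sol_prod t Ht). rewrite <- sol_eq_g1_g2, <- h1_eq_h2 in Hprod by exact Ht.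
  apply Rsqr_inj; [lra | apply Rmult_le_pos; [apply Rlt_le, Rdiv_lt_0_compat |]; lra |].
  unfold Rsqr. replace (h0 / h1 * g1 t * (h0 / h1 * g1 t)) with (h0 ^ 2 / h1 ^ 2 * (g1 t * g1 t))
    by (field; lra).
  rewrite Hprod. field. lra.
Qed.

Lemma sol_eq_g1_inv6 t : 0 <= t -> / g1 t ^ 6 = 24 * (h0 / h1) ^ 2 * b * t + / h1 ^ 6.
Proof.
  intros Ht. set (k := 24 * (h0 / h1) ^ 2 * b).
  destruct sol_init as (_ & E1 & _). destruct sol_continuity as (_ & C1 & _).
  enough (/ g1 t ^ 6 - k * t = / g1 0 ^ 6 - k * 0) by (rewrite E1 in *; lra).
  apply (const_of_is_derive_zero (fun s => / g1 s ^ 6 - k * s)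
    (fun s => / extend0 g1 s ^ 6 - k * s)); [| | | exact Ht].
  - intros s Hs. destruct (sol_is_derive s Hs) as (_ & D1 & _).
    destruct (sol_pos s (Rlt_le _ _ Hs)) as (_ & Q1 & _).
    auto_derive.
    + ex_derive_from_hyps. exact (Rgt_not_eq _ _ (pow_lt _ 6 Q1)).
    + derive_with_hyps. unfold rhs11, qB, k.
      rewrite <- sol_eq_g1_g2, sol_eq_g0 by lra. field. lra.
  - apply continuity_pt_minus;
      [apply continuity_pt_inv; [continuity_from_hyps|] | continuity_from_hyps].
    rewrite extend0_nonneg, E1 by lra. apply pow_nonzero. lra.
  - intros s Hs. rewrite extend0_nonneg by exact Hs. reflexivity.
Qed.

Lemma sol_eq_formula t : 0 <= t ->
  let E := 24 * (h0 / h1) ^ 2 * b * t + / h1 ^ 6 in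
  g0 t = h0 / h1 * Rpower E (- (1 / 6)) /\ g1 t = Rpower E (- (1 / 6)) /\
  g2 t = Rpower E (- (1 / 6)) /\ g3 t = h1 ^ 3 * h3 * Rpower E (1 / 2).
Proof.
  intros Ht E. destruct (sol_pos t Ht) as (Q0 & Q1 & _).
  assert (HE : E = / g1 t ^ 6) by (unfold E; rewrite sol_eq_g1_inv6 by exact Ht; reflexivity).
  assert (Hg1 : Rpower E (- (1 / 6)) = g1 t).
  { rewrite HE, Rpower_inv_pow by exact Q1. simpl INR.
    replace (- (- (1 / 6) * (1 + 1 + 1 + 1 + 1 + 1))) with 1 by field. apply Rpower_1, Q1. }
  assert (Hg3 : Rpower E (1 / 2) = / g1 t ^ 3).
  { rewrite HE, Rpower_inv_pow by exact Q1. simpl INR.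
    replace (- (1 / 2 * (1 + 1 + 1 + 1 + 1 + 1))) with (- INR 3) by (simpl; field).
    rewrite Rpower_Ropp, Rpower_pow by exact Q1. reflexivity. }
  rewrite Hg1, Hg3, <- sol_eq_g1_g2 by exact Ht.
  split; [apply sol_eq_g0, Ht | split; [reflexivity | split; [reflexivity|]]].
  apply (Rmult_eq_reg_l (g0 t ^ 3)); [| apply pow_nonzero; lra].
  rewrite sol_g0_cube_g3, sol_eq_g0 by exact Ht. field. lra.
Qed.

End EqualData.

Section SmallerData.

Hypothesis h1_lt_h2 : h1 < h2.

Lemma sol_g1_lt_g2 t : 0 <= t -> g1 t < g2 t.
Proof.
  intros Ht. destruct sol_init as (_ & E1 & E2 & _). destruct sol_continuity as (_ & C1 & C2 & _).
  enough (0 < g2 t - g1 t) by lra.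
  apply (pos_of_nonvanishing (fun s => g2 s - g1 s)); [| rewrite E1, E2; lra | | exact Ht].
  - intro s. apply (continuity_pt_minus (extend0 g2) (extend0 g1)); auto.
  - intros s Hs Heq. destruct (sol_pos s Hs) as (_ & Q1 & Q2 & _).
    assert (HK : K h1 h2 = 0)
      by (rewrite <- (sol_K s Hs), (Rminus_diag_uniq _ _ Heq); apply K_diag).
    apply K_eq0 in HK; lra.
Qed.

Lemma sol_g2_decr : strict_decr_on_nonneg g2.
Proof.
  apply (strict_decr_of_deriv_neg g2 (fun t => rhs22 b (g0 t) (g1 t) (g2 t) (g3 t))).
  - intros t Ht. apply is_derive_Reals, (sol_is_derive t Ht).
  - apply right_cont0_of_extend0, sol_continuity.
  - intros t Ht. destruct (sol_pos t ltac:(lra)) as (Q0 & Q1 & Q2 & _).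
    assert (0 < qB (g2 t) (g1 t)) by (apply qB_pos; [exact Q1 | apply sol_g1_lt_g2; lra]).
    assert (0 < g0 t ^ 2) by (apply pow_lt; exact Q0).
    assert (0 < b * qB (g2 t) (g1 t) * g0 t ^ 2 * g2 t) by (repeat apply Rmult_lt_0_compat; lra).
    unfold rhs22. lra.
Qed.

Lemma sol_ratio_incr : strict_incr_on_nonneg (fun t => g1 t / g2 t).
Proof.
  destruct sol_init as (_ & E1 & E2 & _). destruct sol_continuity as (_ & C1 & C2 & _).
  apply (strict_incr_of_deriv_pos _
    (fun t => b * g0 t ^ 2 * (qB (g2 t) (g1 t) - qB (g1 t) (g2 t)) * (g1 t / g2 t))).
  - intros t Ht. destruct (sol_is_derive t Ht) as (_ & D1 & D2 & _).
    destruct (sol_pos t (Rlt_le _ _ Ht)) as (_ & _ & Q2 & _).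
    apply is_derive_Reals. auto_derive.
    + ex_derive_from_hyps. lra.
    + derive_with_hyps. unfold rhs11, rhs22. field. lra.
  - apply (right_cont0_of_continuity_pt (fun t => extend0 g1 t / extend0 g2 t)).
    + apply continuity_pt_div; auto. rewrite extend0_nonneg, E2 by lra. lra.
    + intros s Hs. rewrite !extend0_nonneg by exact Hs. reflexivity.
  - intros t Ht. destruct (sol_pos t ltac:(lra)) as (Q0 & Q1 & Q2 & _).
    assert (0 < qB (g2 t) (g1 t) - qB (g1 t) (g2 t))
      by (pose proof (qB_lt_swap _ _ Q1 (sol_g1_lt_g2 t ltac:(lra))); lra).
    assert (0 < g0 t ^ 2) by (apply pow_lt; exact Q0).
    assert (0 < g1 t / g2 t) by (apply Rdiv_lt_0_compat; assumption).
    apply Rmult_lt_0_compat; [apply Rmult_lt_0_compat; [apply Rmult_lt_0_compat|] |]; assumption.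
Qed.

Lemma sol_eta_relation t : 0 <= t ->
  (g1 t * g2 t) ^ 25 =
  (h1 * h2) ^ 25 / ((h2 - h1) ^ 4 * (2 * h2 ^ 2 + h1 * h2 + 2 * h1 ^ 2) ^ 3) *
  (g2 t - g1 t) ^ 4 * (2 * g2 t ^ 2 + g1 t * g2 t + 2 * g1 t ^ 2) ^ 3.
Proof.
  intros Ht. destruct (sol_pos t Ht) as (_ & Q1 & Q2 & _).
  assert (HK := sol_K t Ht). unfold K in HK.
  assert (0 < 2 * h2 ^ 2 + h1 * h2 + 2 * h1 ^ 2) by nra.
  assert (0 < (h2 - h1) ^ 4) by (apply pow_lt; lra).
  rewrite Rmult_assoc.
  replace ((g2 t - g1 t) ^ 4 * (2 * g2 t ^ 2 + g1 t * g2 t + 2 * g1 t ^ 2) ^ 3)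
    with ((h2 - h1) ^ 4 * (2 * h2 ^ 2 + h1 * h2 + 2 * h1 ^ 2) ^ 3 / (h1 * h2) ^ 25 *
          (g1 t * g2 t) ^ 25)
    by (rewrite <- HK; field; split; lra).
  field. repeat split; try lra; apply pow_nonzero; lra.
Qed.

End SmallerData.

End Solution.

(** * Existence of global solutions *)

Definition Pr (x : R) : R := 2 * x ^ 3 + 3 * x ^ 2 + 3 * x + 2.

(* With [r = g1 / g2] and [Y = g2], the first integrals give [g0 = sqrt (mu r) Y] and
   [g3 = C / g0^3], and the system reduces to the two equations below because
   [qB y x - qB x y = 4 y^3 (y - x) Pr (x / y)]. *)
Lemma is_global_solution_of_profile b mu C (r Y : R -> R) h0 h1 h2 h3 :
  0 < mu -> 0 < h0 ->
  (forall t, 0 < t -> 0 < r t /\ 0 < Y t /\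
    is_derive r t (4 * b * mu * r t ^ 2 * Y t ^ 6 * (1 - r t) * Pr (r t)) /\
    is_derive Y t (- b * mu * r t * Y t ^ 7 * qB 1 (r t))) ->
  continuity_pt r 0 -> continuity_pt Y 0 -> 0 < r 0 -> 0 < Y 0 ->
  mu * r 0 * Y 0 ^ 2 = h0 ^ 2 -> r 0 * Y 0 = h1 -> Y 0 = h2 -> C = h0 ^ 3 * h3 ->
  is_global_solution b h0 h1 h2 h3 (fun t => sqrt (mu * r t) * Y t) (fun t => r t * Y t) Y
    (fun t => C / (sqrt (mu * r t) * Y t) ^ 3).
Proof.
  intros Hmu Hh0 HD Cr CY Hr0 HY0 I0 I1 I2 I3.
  assert (Hmr0 : 0 < mu * r 0) by (apply Rmult_lt_0_compat; assumption).
  assert (Hg0 : sqrt (mu * r 0) * Y 0 = h0).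
  { assert (0 < sqrt (mu * r 0)) by (apply sqrt_lt_R0; exact Hmr0).
    apply Rsqr_inj; [nra | lra |]. unfold Rsqr.
    replace (sqrt (mu * r 0) * Y 0 * (sqrt (mu * r 0) * Y 0))
      with (sqrt (mu * r 0) * sqrt (mu * r 0) * Y 0 ^ 2) by ring.
    rewrite sqrt_sqrt by lra. simpl in I0. lra. }
  assert (C0 : continuity_pt (fun t => sqrt (mu * r t) * Y t) 0).
  { apply continuity_pt_mult; [| exact CY].
    apply (continuity_pt_comp (fun t => mu * r t) sqrt); [continuity_from_hyps|].
    apply continuity_pt_sqrt. lra. }
  assert (Hcont : forall f, continuity_pt f 0 -> right_cont0 f)
    by (intros f Hf; exact (right_cont0_of_continuity_pt f f Hf (fun _ _ => eq_refl))).
  split; [exact Hg0 | split; [exact I1 | split; [exact I2 | split]]].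
  { cbv beta. rewrite Hg0, I3. field. lra. }
  split; [apply Hcont, C0 |].
  split; [apply Hcont; continuity_from_hyps |].
  split; [apply Hcont, CY |].
  split.
  { apply Hcont, continuity_pt_div; [continuity_from_hyps | apply continuity_pt_pow_comp, C0 |].
    cbv beta. rewrite Hg0. apply pow_nonzero. lra. }
  intros t Ht. destruct (HD t Ht) as (Q1 & Q2 & Dr & DY).
  assert (Hmr : 0 < mu * r t) by (apply Rmult_lt_0_compat; assumption).
  assert (Hs := sqrt_lt_R0 _ Hmr). assert (Hs2 := sqrt_sqrt _ (Rlt_le _ _ Hmr)).
  assert (Hmu_eq : mu = sqrt (mu * r t) * sqrt (mu * r t) / r t) by (rewrite Hs2; field; lra).
  assert (Hg0t : 0 < sqrt (mu * r t) * Y t) by (apply Rmult_lt_0_compat; assumption).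
  split; [|split; [|split]]; apply is_derive_Reals; auto_derive;
    try (ex_derive_from_hyps; first [exact Hmr | exact (Rgt_not_eq _ _ (pow_lt _ 3 Hg0t))]);
    derive_with_hyps; unfold rhs00, rhs11, rhs22, rhs33, pB, qB, Pr;
    set (s := sqrt (mu * r t)) in *; clearbody s; try rewrite Hmu_eq; field; lra.
Qed.

Lemma exists_solution_eq_data b h0 h h3 : 0 < h0 -> 0 < h -> 0 <= b ->
  exists g0 g1 g2 g3 : R -> R, is_global_solution b h0 h h h3 g0 g1 g2 g3.
Proof.
  intros Hh0 Hh Hb. set (mu := h0 ^ 2 / h ^ 2).
  assert (Hmu : 0 < mu) by (apply Rdiv_lt_0_compat; apply pow_lt; assumption).
  set (E := fun t => 24 * b * mu * t + / h ^ 6).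
  set (Y := fun t => Rpower (E t) (- (1 / 6))).
  assert (HE : forall t, 0 <= t -> 0 < E t).
  { intros t Ht. assert (0 < / h ^ 6) by (apply Rinv_0_lt_compat, pow_lt; exact Hh).
    assert (0 <= b * mu * t) by (apply Rmult_le_pos; [apply Rmult_le_pos|]; lra).
    unfold E. lra. }
  assert (HY6 : forall t, 0 <= t -> Y t ^ 6 = / E t).
  { intros t Ht. unfold Y. rewrite <- Rpower_pow, Rpower_mult by apply exp_pos.
    simpl INR. replace (- (1 / 6) * (1 + 1 + 1 + 1 + 1 + 1)) with (Ropp 1) by field.
    rewrite Rpower_Ropp, Rpower_1 by (apply HE; exact Ht). reflexivity. }
  assert (DY : forall t, 0 <= t -> is_derive Y t (- b * mu * 1 * Y t ^ 7 * qB 1 1)).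
  { intros t Ht. assert (Et := HE t Ht).
    apply (is_derive_rw _ _ (Y t * (- (1 / 6) * (24 * b * mu) / E t))).
    - revert Et. unfold Y, Rpower, E. generalize (/ h ^ 6). intros c Ec.
      auto_derive; [exact Ec | field; lra].
    - replace (Y t ^ 7) with (Y t * Y t ^ 6) by ring. rewrite HY6 by exact Ht.
      unfold qB. field. lra. }
  assert (HY0 : Y 0 = h).
  { unfold Y, E. rewrite Rmult_0_r, Rplus_0_l, Rpower_inv_pow by exact Hh. simpl INR.
    replace (- (- (1 / 6) * (1 + 1 + 1 + 1 + 1 + 1))) with 1 by field. apply Rpower_1, Hh. }
  exists (fun t => sqrt (mu * 1) * Y t), (fun t => 1 * Y t), Y,
    (fun t => h0 ^ 3 * h3 / (sqrt (mu * 1) * Y t) ^ 3).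
  apply (is_global_solution_of_profile b mu _ (fun _ => 1)); try rewrite HY0; try lra.
  - intros t Ht. split; [lra | split; [apply exp_pos | split]].
    + apply (is_derive_rw _ _ 0); [apply is_derive_Reals, derivable_pt_lim_const | ring].
    + apply DY. lra.
  - apply continuity_pt_const. intros ? ?; reflexivity.
  - apply derivable_continuous_pt. exists (- b * mu * 1 * Y 0 ^ 7 * qB 1 1).
    apply is_derive_Reals, DY. lra.
  - unfold mu. field. lra.
Qed.

Section PrimitiveInverse.

Variables (f : R -> R) (r0 c : R).
Hypotheses (r0_range : 0 < r0 < 1) (c_pos : 0 < c).
Hypothesis f_cont : forall z, 0 < z < 1 -> continuous f z.
Hypothesis f_lower : forall z, r0 <= z < 1 -> / (c * (1 - z)) <= f z.

Lemma integrand_pos z : r0 <= z < 1 -> 0 < f z.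
Proof.
  intros Hz. eapply Rlt_le_trans; [| apply f_lower, Hz].
  apply Rinv_0_lt_compat, Rmult_lt_0_compat; lra.
Qed.

Lemma primitive_base : RInt f r0 r0 = 0.
Proof. exact (@RInt_point R_CompleteNormedModule r0 f). Qed.

Lemma primitive_deriv x : 0 < x < 1 -> derivable_pt_lim (fun y => RInt f r0 y) x (f x).
Proof.
  intros Hx. apply is_derive_Reals, (is_derive_RInt f _ r0); [| apply f_cont, Hx].
  apply (locally_interval _ x 0 1); simpl; try lra.
  intros y Hy0 Hy1. apply (@RInt_correct R_CompleteNormedModule).
  apply (@ex_RInt_continuous R_CompleteNormedModule).
  intros z Hz. apply f_cont. split.
  - eapply Rlt_le_trans; [| apply Hz]. apply Rmin_glb_lt; lra.
  - eapply Rle_lt_trans; [apply Hz |]. apply Rmax_lub_lt; lra.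
Qed.

Lemma primitive_incr x y : r0 <= x -> x < y -> y < 1 -> RInt f r0 x < RInt f r0 y.
Proof.
  intros Hx Hxy Hy. apply (increasing_of_deriv_pos _ f); [exact Hxy | |].
  - intros z Hz. apply primitive_deriv. lra.
  - intros z Hz. apply integrand_pos. lra.
Qed.

(* [f >= 1 / (c (1 - z))] integrates to a logarithmic lower bound, so the primitive is onto
   [[0, +oo)]. *)
Lemma primitive_lower y : r0 <= y < 1 -> (ln (1 - r0) - ln (1 - y)) / c <= RInt f r0 y.
Proof.
  intros Hy.
  enough (0 + ln (1 - r0) / c <= RInt f r0 y + ln (1 - y) / c) by (unfold Rdiv in *; lra).
  rewrite <- primitive_base at 1.
  apply (nondecreasing_of_deriv_nonneg (fun z => RInt f r0 z + ln (1 - z) / c)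
    (fun z => f z + (/ (1 - z) * (0 - 1)) / c)); [apply Hy | |].
  - intros z Hz. apply derivable_pt_lim_plus; [apply primitive_deriv; lra |].
    apply derivable_pt_lim_div_scal, (derivable_pt_lim_comp (fun z => 1 - z) ln).
    + apply derivable_pt_lim_minus; [apply derivable_pt_lim_const | apply derivable_pt_lim_id].
    + apply derivable_pt_lim_ln. lra.
  - intros z Hz. assert (Hl := f_lower z ltac:(lra)).
    replace (/ (c * (1 - z))) with (/ (1 - z) / c) in Hl by (field; lra). lra.
Qed.

Lemma primitive_onto s : 0 <= s -> exists y, r0 <= y < 1 /\ RInt f r0 y = s.
Proof.
  intros Hs. destruct (Rle_lt_or_eq_dec _ _ Hs) as [Hs0 | <-];
    [| exists r0; split; [lra | apply primitive_base]].
  set (y1 := 1 - (1 - r0) * exp (- (c * s) - 1)).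
  assert (He : 0 < exp (- (c * s) - 1) < 1).
  { split; [apply exp_pos|]. rewrite <- exp_0 at 2. apply exp_increasing.
    assert (0 < c * s) by (apply Rmult_lt_0_compat; assumption). lra. }
  assert (Hy1 : r0 < y1 < 1) by (unfold y1; split; nra).
  assert (HT1 : s < RInt f r0 y1).
  { eapply Rlt_le_trans; [| apply primitive_lower; lra].
    replace (1 - y1) with ((1 - r0) * exp (- (c * s) - 1)) by (unfold y1; ring).
    rewrite ln_mult, ln_exp by lra.
    apply (Rmult_lt_reg_r c _ _ c_pos). unfold Rdiv. rewrite Rmult_assoc, Rinv_l, Rmult_1_r by lra.
    lra. }
  destruct (IVT_interv (fun y => RInt f r0 y - s) r0 y1) as (y & Hy & Hroot).
  - intros a Ha. apply continuity_pt_minus; [| apply continuity_pt_const; intros ? ?; reflexivity].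
    apply derivable_continuous_pt. exists (f a). apply primitive_deriv. lra.
  - lra.
  - rewrite primitive_base. lra.
  - lra.
  - exists y. split; [lra | simpl in Hroot; lra].
Qed.

Section Inverse.

Variable r : R -> R.
Hypothesis r_spec : forall t, r0 <= r t < 1 /\ RInt f r0 (r t) = Rmax t 0.

Lemma primitive_inj x y : r0 <= x < 1 -> r0 <= y < 1 -> RInt f r0 x <= RInt f r0 y -> x <= y.
Proof.
  intros Hx Hy Hxy. destruct (Rle_or_lt x y) as [| Hlt]; [assumption|].
  pose proof (primitive_incr y x ltac:(lra) Hlt ltac:(lra)). lra.
Qed.

Lemma inverse_primitive_nonpos t : t <= 0 -> r t = r0.
Proof.
  intros Ht. apply Rle_antisym; [| apply r_spec].
  apply primitive_inj; [apply r_spec | lra |].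
  rewrite (proj2 (r_spec t)), primitive_base, Rmax_right by exact Ht. lra.
Qed.

Lemma inverse_primitive_le s t : 0 <= s <= t -> r s <= r t.
Proof.
  intros Hst. apply primitive_inj; [apply r_spec | apply r_spec |].
  rewrite (proj2 (r_spec s)), (proj2 (r_spec t)), !Rmax_left; lra.
Qed.

Lemma inverse_primitive_cont0 : continuity_pt r 0.
Proof.
  intros eps He. set (ye := Rmin (r0 + eps / 2) ((r0 + 1) / 2)).
  assert (Hye : r0 < ye < 1 /\ ye <= r0 + eps / 2).
  { unfold ye.
    repeat split; [apply Rmin_glb_lt | eapply Rle_lt_trans; [apply Rmin_r|] | apply Rmin_l];
      lra. }
  exists (RInt f r0 ye). split; [rewrite <- primitive_base; apply primitive_incr; lra|].
  intros x [_ Hx]. simpl in *. unfold R_dist in *. rewrite Rminus_0_r in Hx.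
  rewrite (inverse_primitive_nonpos 0) by lra.
  destruct (Rle_or_lt x 0) as [Hx0 | Hx0];
    [rewrite inverse_primitive_nonpos, Rminus_diag, Rabs_R0 by exact Hx0; exact He|].
  assert (r x <= ye).
  { apply primitive_inj; [apply r_spec | lra |].
    rewrite (proj2 (r_spec x)), Rmax_left by lra. apply Rabs_def2 in Hx. lra. }
  pose proof (proj1 (r_spec x)). rewrite Rabs_right; lra.
Qed.

Lemma inverse_primitive_deriv t : 0 < t -> derivable_pt_lim r t (/ f (r t)).
Proof.
  intros Ht. set (T := fun y => RInt f r0 y).
  assert (Hrt : forall s, 0 <= s -> T (r s) = s)
    by (intros s Hs; unfold T; rewrite (proj2 (r_spec s)); apply Rmax_left; exact Hs).
  assert (Hr0 : r 0 = r0) by (apply inverse_primitive_nonpos; lra).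
  assert (Hu : r0 < r (t + 1) < 1).
  { split; [| apply r_spec]. destruct (proj1 (r_spec (t + 1))) as [[Hlt | Heq] _]; [exact Hlt|].
    pose proof (Hrt (t + 1) ltac:(lra)) as H. unfold T in H.
    rewrite <- Heq, primitive_base in H. lra. }
  assert (Hrange : forall x, 0 <= x <= t + 1 -> r0 <= r x <= r (t + 1))
    by (intros x Hx; split; [apply r_spec | apply inverse_primitive_le; lra]).
  assert (Cr : continuity_pt r t).
  { apply (continuity_pt_recip_interv T r r0 (r (t + 1))); try lra.
    - intros x y Hx Hxy Hy. apply primitive_incr; lra.
    - intros x Hx1 Hx2. unfold T in Hx1. rewrite primitive_base in Hx1.
      unfold comp, id. apply Hrt. lra.
    - intros x Hx1 Hx2. unfold T in Hx1. rewrite primitive_base in Hx1. rewrite Hrt in Hx2 by lra.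
      apply Hrange. lra.
    - intros a Ha. apply derivable_continuous_pt. exists (f a). apply primitive_deriv. lra.
    - unfold T at 1. rewrite primitive_base, Hrt by lra. lra. }
  assert (Hinc : r 0 <= r t <= r (t + 1)) by (rewrite Hr0; apply Hrange; lra).
  assert (HH := derivable_pt_lim_recip_interv T r 0 (t + 1) t
    (fun a Ha => exist _ (f a) (primitive_deriv a ltac:(rewrite Hr0 in Ha; lra))) Cr ltac:(lra)
    ltac:(lra) Hinc).
  simpl in HH. replace (/ f (r t)) with (1 / f (r t)) by (unfold Rdiv; ring). apply HH.
  - intros x Hx. unfold comp, id. apply Hrt. lra.
  - apply Rgt_not_eq, integrand_pos, r_spec.
Qed.

End Inverse.

Lemma exists_inverse_primitive : exists r : R -> R,
  (forall t, r0 <= r t < 1) /\ r 0 = r0 /\ continuity_pt r 0 /\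
  forall t, 0 < t -> derivable_pt_lim r t (/ f (r t)).
Proof.
  destruct (choice (fun t y => r0 <= y < 1 /\ RInt f r0 y = Rmax t 0)) as (r & Hr).
  { intros t. apply primitive_onto, Rmax_r. }
  exists r. split; [intros t; apply Hr | split; [| split]].
  - apply (inverse_primitive_nonpos r Hr). lra.
  - apply (inverse_primitive_cont0 r Hr).
  - apply (inverse_primitive_deriv r Hr).
Qed.

End PrimitiveInverse.

(* On the level set [K (r Y) Y = 1 / eta], the component [Y = g2] is this function of the
   ratio [r = g1 / g2]: [Psi eta r ^ 40 = eta (1 - r)^4 (2 + r + 2 r^2)^3 / r^25]. *)
Definition Psi (eta x : R) : R :=
  exp ((ln eta + 4 * ln (1 - x) + 3 * ln (2 + x + 2 * x ^ 2) - 25 * ln x) / 40).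

Definition ratio_rate (b mu eta x : R) : R := 4 * b * mu * x ^ 2 * Psi eta x ^ 6 * (1 - x) * Pr x.

Lemma ratio_rate_pos b mu eta x : 0 < b -> 0 < mu -> 0 < x < 1 -> 0 < ratio_rate b mu eta x.
Proof.
  intros Hb Hmu Hx. unfold ratio_rate, Pr.
  assert (0 < Psi eta x ^ 6) by (apply pow_lt, exp_pos).
  assert (0 < x ^ 2) by (apply pow_lt; lra).
  assert (0 < x ^ 3) by (apply pow_lt; lra).
  assert (0 < 2 * x ^ 3 + 3 * x ^ 2 + 3 * x + 2) by lra.
  apply Rmult_lt_0_compat; [| lra]. apply Rmult_lt_0_compat; [| lra].
  apply Rmult_lt_0_compat; [| assumption]. apply Rmult_lt_0_compat; [| assumption].
  apply Rmult_lt_0_compat; lra.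
Qed.

Lemma ratio_rate_le b mu eta r0 z : 0 < b -> 0 < mu -> 0 < r0 -> r0 <= z < 1 ->
  ratio_rate b mu eta z <= 40 * b * mu * exp ((ln eta + 3 * ln 5 - 25 * ln r0) / 40) ^ 6 * (1 - z).
Proof.
  intros Hb Hmu Hr0 Hz. unfold ratio_rate.
  assert (HPsi : Psi eta z <= exp ((ln eta + 3 * ln 5 - 25 * ln r0) / 40)).
  { apply exp_le_compat.
    assert (ln (1 - z) <= 0) by (rewrite <- ln_1; apply ln_le; lra).
    assert (ln (2 + z + 2 * z ^ 2) <= ln 5) by (apply ln_le; nra).
    assert (ln r0 <= ln z) by (apply ln_le; lra).
    lra. }
  assert (HPsi6 : Psi eta z ^ 6 <= exp ((ln eta + 3 * ln 5 - 25 * ln r0) / 40) ^ 6)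
    by (apply pow_incr; split; [apply Rlt_le, exp_pos | exact HPsi]).
  assert (HPr : 0 <= Pr z <= 10) by (unfold Pr; split; nra).
  assert (Hz2 : 0 <= z ^ 2 <= 1) by (split; [apply pow2_ge_0 | nra]).
  assert (0 <= Psi eta z ^ 6) by (apply pow_le, Rlt_le, exp_pos).
  replace (4 * b * mu * z ^ 2 * Psi eta z ^ 6 * (1 - z) * Pr z)
    with ((4 * b * mu * (1 - z)) * (z ^ 2 * (Psi eta z ^ 6 * Pr z))) by ring.
  replace (40 * b * mu * exp ((ln eta + 3 * ln 5 - 25 * ln r0) / 40) ^ 6 * (1 - z))
    with ((4 * b * mu * (1 - z)) * (1 * (exp ((ln eta + 3 * ln 5 - 25 * ln r0) / 40) ^ 6 * 10)))
    by ring.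
  apply Rmult_le_compat_l; [apply Rmult_le_pos; [nra | lra] |].
  apply Rmult_le_compat; try lra; [apply Rmult_le_pos; lra |].
  apply Rmult_le_compat; lra.
Qed.

Lemma continuous_inv_ratio_rate b mu eta x : 0 < b -> 0 < mu -> 0 < eta -> 0 < x < 1 ->
  continuous (fun z => / ratio_rate b mu eta z) x.
Proof.
  intros Hb Hmu Heta Hx. apply (@ex_derive_continuous R_AbsRing R_NormedModule).
  assert (Hpos := ratio_rate_pos b mu eta x Hb Hmu Hx).
  unfold ratio_rate, Psi, Pr. auto_derive.
  repeat split; first [exact (Rgt_not_eq _ _ Hpos) | lra | nra].
Qed.

Lemma div_in_unit_interval x y : 0 < x < y -> 0 < x / y < 1.
Proof.
  intros Hxy. split; [apply Rdiv_lt_0_compat; lra|].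
  apply (Rmult_lt_reg_r y); [lra|]. unfold Rdiv. rewrite Rmult_assoc, Rinv_l; lra.
Qed.

Lemma Psi_ratio eta h1 h2 : 0 < h1 < h2 ->
  eta = h2 ^ 40 * (h1 / h2) ^ 25 / ((1 - h1 / h2) ^ 4 * (2 + h1 / h2 + 2 * (h1 / h2) ^ 2) ^ 3) ->
  Psi eta (h1 / h2) = h2.
Proof.
  intros Hh Heta. set (r0 := h1 / h2) in *.
  assert (Hr0 : 0 < r0 < 1) by (apply div_in_unit_interval; lra).
  assert (0 < 2 + r0 + 2 * r0 ^ 2) by nra.
  unfold Psi. rewrite <- (exp_ln h2) by lra. f_equal. rewrite Heta.
  rewrite ln_div by (try apply Rmult_lt_0_compat; apply pow_lt; lra).
  rewrite !ln_mult by (apply pow_lt; lra).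
  rewrite !Rcomplements.ln_pow by lra. simpl INR. field.
Qed.

Lemma exists_solution_lt_data b h0 h1 h2 h3 : 0 < b -> 0 < h0 -> 0 < h1 -> h1 < h2 ->
  exists g0 g1 g2 g3 : R -> R, is_global_solution b h0 h1 h2 h3 g0 g1 g2 g3.
Proof.
  intros Hb Hh0 Hh1 H12. set (r0 := h1 / h2).
  assert (Hr0 : 0 < r0 < 1) by (apply div_in_unit_interval; lra).
  set (eta := h2 ^ 40 * r0 ^ 25 / ((1 - r0) ^ 4 * (2 + r0 + 2 * r0 ^ 2) ^ 3)).
  assert (Heta : 0 < eta).
  { assert (0 < 2 + r0 + 2 * r0 ^ 2) by nra.
    unfold eta. apply Rdiv_lt_0_compat; [apply Rmult_lt_0_compat | apply Rmult_lt_0_compat];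
      apply pow_lt; lra. }
  set (mu := h0 ^ 2 / (h1 * h2)).
  assert (Hmu : 0 < mu) by (apply Rdiv_lt_0_compat; [apply pow_lt | apply Rmult_lt_0_compat]; lra).
  set (c := 40 * b * mu * exp ((ln eta + 3 * ln 5 - 25 * ln r0) / 40) ^ 6).
  assert (Hc : 0 < c).
  { pose proof (pow_lt _ 6 (exp_pos ((ln eta + 3 * ln 5 - 25 * ln r0) / 40))).
    unfold c. apply Rmult_lt_0_compat; [nra | lra]. }
  destruct (exists_inverse_primitive (fun z => / ratio_rate b mu eta z) r0 c Hr0 Hc)
    as (r & Hr & Hrr0 & Cr & Dr).
  - intros z Hz. apply continuous_inv_ratio_rate; assumption.
  - intros z Hz. apply Rinv_le_contravar; [apply ratio_rate_pos; lra | apply ratio_rate_le; lra].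
  - set (Y := fun t => Psi eta (r t)).
    assert (HY0 : Y 0 = h2) by (unfold Y; rewrite Hrr0; apply Psi_ratio; [lra | reflexivity]).
    exists (fun t => sqrt (mu * r t) * Y t), (fun t => r t * Y t), Y,
      (fun t => h0 ^ 3 * h3 / (sqrt (mu * r t) * Y t) ^ 3).
    apply is_global_solution_of_profile; try assumption; try rewrite Hrr0; try rewrite HY0;
      try (unfold r0, mu; field); try lra.
    + intros t Ht. assert (Hrt : 0 < r t < 1) by (pose proof (Hr t); lra).
      assert (Dr' : is_derive r t (ratio_rate b mu eta (r t))).
      { apply is_derive_Reals. rewrite <- (Rinv_inv (ratio_rate b mu eta (r t))). apply Dr, Ht. }
      split; [lra | split; [apply exp_pos | split; [exact Dr' |]]].
      apply is_derive_Reals, is_derive_Reals. unfold Y, Psi. auto_derive.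
      * repeat split; try (eexists; eassumption); lra || nra.
      * derive_with_hyps. unfold ratio_rate.
        repeat match goal with |- context [exp ?a] =>
          replace (exp a) with (Psi eta (r t)) by reflexivity end.
        unfold Pr, qB. field. repeat split; lra || nra.
    + unfold Y. apply (continuity_pt_comp r (Psi eta)); [exact Cr|].
      rewrite Hrr0. apply continuity_pt_filterlim, (@ex_derive_continuous R_AbsRing R_NormedModule).
      unfold Psi. auto_derive. repeat split; lra || nra.
Qed.

Lemma is_global_solution_swap b h0 h1 h2 h3 g0 g1 g2 g3 :
  is_global_solution b h0 h2 h1 h3 g0 g1 g2 g3 -> is_global_solution b h0 h1 h2 h3 g0 g2 g1 g3.
Proof.
  intros (E0 & E1 & E2 & E3 & R0 & R1 & R2 & R3 & D).
  do 8 (split; [assumption|]). intros t Ht. destruct (D t Ht) as (D0 & D1 & D2 & D3).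
  unfold rhs00, rhs33 in *. rewrite pB_comm. auto.
Qed.

Theorem theorem5p3 (h0 h1 h2 h3 : R) :
  0 < h0 -> 0 < h1 -> 0 < h2 -> 0 < h3 ->
  let deth := h0 * h1 * h2 * h3 in
  let beta := 1 / (6 * deth ^ 2) in
  (exists g0 g1 g2 g3 : R -> R, is_global_solution beta h0 h1 h2 h3 g0 g1 g2 g3) /\
  (forall g0 g1 g2 g3 : R -> R,
    is_global_solution beta h0 h1 h2 h3 g0 g1 g2 g3 ->
    tends_at_infty g0 0 /\ tends_at_infty g1 0 /\ tends_at_infty g2 0 /\
    strict_incr_on_nonneg g3 /\ diverges_at_infty g3 /\
    tends_at_infty (fun t => g1 t / g2 t) 1 /\
    (h1 = h2 ->
      let mu := h0 ^ 3 * h3 / deth in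
      forall t, 0 <= t ->
        g0 t = Rpower mu (1/2) * Rpower (24 * mu * beta * t + / h1 ^ 6) (- (1/6)) /\
        g1 t = Rpower (24 * mu * beta * t + / h1 ^ 6) (- (1/6)) /\
        g2 t = Rpower (24 * mu * beta * t + / h1 ^ 6) (- (1/6)) /\
        g3 t = h1 ^ 3 * h3 * Rpower (24 * mu * beta * t + / h1 ^ 6) (1/2)) /\
    (h1 < h2 ->
      let eta := (h1 * h2) ^ 25 /
                 ((h2 - h1) ^ 4 * (2 * h2 ^ 2 + h1 * h2 + 2 * h1 ^ 2) ^ 3) in
      (forall t, 0 <= t -> g1 t < g2 t) /\
      strict_decr_on_nonneg g2 /\
      strict_incr_on_nonneg (fun t => g1 t / g2 t) /\
      (forall t, 0 <= t ->
        (g1 t * g2 t) ^ 25 =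
        eta * (g2 t - g1 t) ^ 4 * (2 * g2 t ^ 2 + g1 t * g2 t + 2 * g1 t ^ 2) ^ 3))).
Proof.
  intros P0 P1 P2 P3 deth beta.
  assert (Hb : 0 < beta).
  { unfold beta, deth. apply Rdiv_lt_0_compat; [lra|].
    apply Rmult_lt_0_compat; [lra | apply pow_lt; repeat apply Rmult_lt_0_compat; assumption]. }
  split.
  - destruct (Rtotal_order h1 h2) as [H12 | [<- | H21]].
    + apply exists_solution_lt_data; assumption.
    + apply exists_solution_eq_data; lra.
    + destruct (exists_solution_lt_data beta h0 h2 h1 h3) as (g0 & g1 & g2 & g3 & Hs);
        try assumption.
      exists g0, g2, g1, g3. apply is_global_solution_swap, Hs.
  - intros g0 g1 g2 g3 Hs.
    split; [apply (sol_g0_tends_0 Hs); assumption|].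
    split; [apply (sol_g1_tends_0 Hs); assumption|].
    split; [apply (sol_g2_tends_0 Hs); assumption|].
    split; [apply (sol_g3_incr Hs); assumption|].
    split; [apply (sol_g3_diverges Hs); assumption|].
    split; [apply (sol_ratio_tends_1 Hs); assumption|].
    split.
    + intros H12 mu t Ht.
      assert (Hmu : mu = (h0 / h1) ^ 2) by (unfold mu, deth; rewrite <- H12; field; lra).
      rewrite Hmu, Rpower_sqr_half by (apply Rdiv_lt_0_compat; assumption).
      apply (sol_eq_formula Hs); assumption.
    + intros H12 eta.
      split; [apply (sol_g1_lt_g2 Hs); assumption|].
      split; [apply (sol_g2_decr Hs); assumption|].
      split; [apply (sol_ratio_incr Hs); assumption|].
      apply (sol_eta_relation Hs); assumption.
Qed.
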